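(* Let $\vec r_1,\vec r_2$ be in the closed unit ball of $\mathbb{R}^3$, both orthogonal to $(0,0,1)$, with $r_i=|\vec r_i|$. Then for every $p\ge1$, $$D^p_{z,p}(\rho(\vec r_1),\rho(\vec r_2))=2^{p-1}\Big(1-\sqrt{1-\max(r_1^2,r_2^2)}\Big).$$ In particular, if $r_1\ge r_2$, then $D^p_{z,p}(\rho(\vec r_1),\rho(\vec r_2))=D^p_{z,p}(\rho(\vec r_2),\rho(\vec r_1))=D^p_{z,p}(\rho(\vec r_1),\rho(\vec r_1))$.
   Context: Qubit setting: $\mathcal{H}=\mathbb{C}^2$, $\mathcal{H}^*$ is identified with $\mathbb{C}^2$ via the dual basis, and $A^T$ is the usual matrix transpose; operators on $\mathcal{H}\otimes\mathcal{H}^*$ are $4\times4$ matrices in the basis $e_1\otimes e_1^*,e_1\otimes e_2^*,e_2\otimes e_1^*,e_2\otimes e_2^*$. $\sigma_x=\begin{pmatrix}0&1\\1&0\end{pmatrix}$, $\sigma_y=\begin{pmatrix}0&-i\\i&0\end{pmatrix}$, $\sigma_z=\begin{pmatrix}1&0\\0&-1\end{pmatrix}$, $\vec\sigma=(\sigma_x,\sigma_y,\sigma_z)$, and $\rho(\vec r)=\tfrac12(I+\vec r\cdot\vec\sigma)$ for $|\vec r|\le1$. The set of couplings of states $\rho,\omega$ is $\mathcal{C}(\rho,\omega)=\{\Pi\in\mathcal{S}(\mathcal{H}\otimes\mathcal{H}^* ):\mathrm{tr}_{\mathcal{H}^*}[\Pi]=\omega,\ \mathrm{tr}_{\mathcal{H}}[\Pi]=\rho^T\}$.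 For $p\ge1$, $C_{z,p}=|\sigma_z\otimes I^T-I\otimes\sigma_z^T|^p=\mathrm{diag}(0,2^p,2^p,0)$, and $D_{z,p}(\rho,\omega)=\big(\min_{\Pi\in\mathcal{C}(\rho,\omega)}\mathrm{tr}[\Pi C_{z,p}]\big)^{1/p}$. *)

From HB Require Import structures.
From mathcomp Require Import all_boot all_order all_algebra.
From mathcomp Require Import complex.
From mathcomp Require Import reals exp.

Set Implicit Arguments. Unset Strict Implicit. Unset Printing Implicit Defensive.
Import Order.TTheory GRing.Theory Num.Theory.
Local Open Scope ring_scope.
Local Open Scope complex_scope.

Section QOT.
Variable R : realType.
Local Notation C := R[i].

Definition adjmx (m n : nat) (A : 'M[C]_(m, n)) : 'M[C]_(n, m) :=
  (map_mx (@Num.conj C) A)^T.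

(* positive semidefinite: <v, A v> >= 0 for all v (order of the
   numClosedField C: real and nonnegative) *)
Definition psd (n : nat) (A : 'M[C]_n) : Prop :=
  forall v : 'cV[C]_n, 0 <= (adjmx v *m A *m v) 0 0.

Definition is_state (n : nat) (A : 'M[C]_n) : Prop :=
  adjmx A = A /\ psd A /\ \tr A = 1.

Definition sigma_x : 'M[C]_2 := \matrix_(i < 2, j < 2) (if i == j then 0 else 1).
Definition sigma_y : 'M[C]_2 :=
  \matrix_(i < 2, j < 2)
    (if i == j then 0 else if (i == 0 :> nat) then - 'i else 'i).
Definition sigma_z : 'M[C]_2 :=
  \matrix_(i < 2, j < 2) (if i == j then (if (i == 0 :> nat) then 1 else -1) else 0).

Definition bloch (r : 'rV[R]_3) : 'M[C]_2 :=
  (1 / 2%:R) *: (1%:M + (r 0 0)%:C *: sigma_x + (r 0 1)%:C *: sigma_y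
                      + (r 0 2%:R)%:C *: sigma_z).

(* Operators on H (x) H^* as 4x4 matrices; the basis vector e_i (x) e_j^*
   has index mxvec_index i j = 2 i + j. *)
Definition pidx (i j : 'I_2) : 'I_(2 * 2) := mxvec_index i j.

Definition ptr_Hstar (P : 'M[C]_(2 * 2)) : 'M[C]_2 :=
  \matrix_(i < 2, i' < 2) \sum_(j < 2) P (pidx i j) (pidx i' j).

Definition ptr_H (P : 'M[C]_(2 * 2)) : 'M[C]_2 :=
  \matrix_(j < 2, j' < 2) \sum_(i < 2) P (pidx i j) (pidx i j').

Definition coupling (rho omega : 'M[C]_2) (P : 'M[C]_(2 * 2)) : Prop :=
  is_state P /\ ptr_Hstar P = omega /\ ptr_H P = rho^T.

Definition cost_z (p : R) : 'M[C]_(2 * 2) :=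
  \matrix_(k < 2 * 2, l < 2 * 2)
    (if (k == l) && ((k == 1 :> nat) || (k == 2 :> nat))
     then (powR 2 p)%:C else 0).

(* v = D_{z,p}(rho, omega)^p = min_{P coupling} tr[P C_{z,p}] :
   the minimum is attained and equals v. *)
Definition is_Dzp_pow (p : R) (rho omega : 'M[C]_2) (v : R) : Prop :=
  (exists P, coupling rho omega P /\ \tr (P *m cost_z p) = v%:C) /\
  (forall P, coupling rho omega P -> v%:C <= \tr (P *m cost_z p)).

Definition dz_formula (p m : R) : R := powR 2 (p - 1) * (1 - Num.sqrt (1 - m)).

End QOT.

(* For equatorial Bloch vectors the marginal constraints force a coupling
   Pi to have diagonal (1/2 - t, t, t, 1/2 - t) with t = Re Pi_11, and its cost is
   2^p * 2t.  The off-diagonal entries of the marginals are Pi_02 + Pi_13 and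
   Pi_01 + Pi_23, so Cauchy-Schwarz on the 2x2 principal minors of Pi gives
   |r_i|^2 <= 16 t (1/2 - t), i.e. 4t >= 1 - sqrt (1 - max |r_i|^2).
   Conversely, for s + t = 1/2 and 16 s t = max |r_i|^2 the matrix with this
   diagonal, the forced off-diagonal entries and suitable corner entries is a
   coupling: if, say, the first marginal saturates, it is a rank-one matrix plus a
   nonnegative multiple of a psd 2x2 block. *)

From HB Require Import structures.
From mathcomp Require Import all_boot all_order all_algebra perm.
From mathcomp Require Import complex.
From mathcomp Require Import reals exp.
From mathcomp Require Import ring lra.
Import Order.TTheory GRing.Theory Num.Theory.
Local Open Scope ring_scope.
Set Implicit Arguments. Unset Strict Implicit. Unset Printing Implicit Defensive.

Section ComplexCoordinates.
Variable R : rcfType.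
Local Open Scope complex_scope.
Implicit Types (x y : R[i]) (a b : R).

Lemma ReD x y : complex.Re (x + y) = complex.Re x + complex.Re y.
Proof. by move: x y => [? ?] [? ?]. Qed.
Lemma ImD x y : complex.Im (x + y) = complex.Im x + complex.Im y.
Proof. by move: x y => [? ?] [? ?]. Qed.
Lemma ReN x : complex.Re (- x) = - complex.Re x. Proof. by case: x. Qed.
Lemma ImN x : complex.Im (- x) = - complex.Im x. Proof. by case: x. Qed.
Lemma ReM x y :
  complex.Re (x * y) = complex.Re x * complex.Re y - complex.Im x * complex.Im y.
Proof. by move: x y => [? ?] [? ?]. Qed.
Lemma ImM x y :
  complex.Im (x * y) = complex.Re x * complex.Im y + complex.Im x * complex.Re y.
Proof. by move: x y => [? ?] [? ?]. Qed.
Lemma ReV x : complex.Re x^-1 = complex.Re x / (complex.Re x ^+ 2 + complex.Im x ^+ 2).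
Proof. by case: x. Qed.
Lemma ImV x :
  complex.Im x^-1 = - (complex.Im x / (complex.Re x ^+ 2 + complex.Im x ^+ 2)).
Proof. by case: x. Qed.
Lemma ReJ x : complex.Re (Num.conj x) = complex.Re x. Proof. by case: x. Qed.
Lemma ImJ x : complex.Im (Num.conj x) = - complex.Im x. Proof. by case: x. Qed.
Lemma Re_cplx a b : complex.Re (a +i* b) = a. Proof. by []. Qed.
Lemma Im_cplx a b : complex.Im (a +i* b) = b. Proof. by []. Qed.
Lemma ReC a : complex.Re a%:C = a. Proof. by []. Qed.
Lemma ImC a : complex.Im a%:C = 0. Proof. by []. Qed.

Lemma ReIm_inj x y : complex.Re x = complex.Re y -> complex.Im x = complex.Im y -> x = y.
Proof. by move: x y => [? ?] [? ?] /= -> ->. Qed.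

End ComplexCoordinates.

(* [0], [1] and ['i] are covered by [Re_cplx] and [Im_cplx] up to conversion. *)
Notation ReImE := (ReD, ImD, ReN, ImN, ReM, ImM, ReV, ImV, ReJ, ImJ,
  Re_cplx, Im_cplx, ReC, ImC).

Section RealEmbedding.
Variable R : rcfType.
Local Open Scope complex_scope.
Implicit Types (x y : R[i]) (a b : R).

Lemma cplxM a b : (a * b)%:C = a%:C * b%:C :> R[i].
Proof. by apply: ReIm_inj; rewrite !ReImE; ring. Qed.
Lemma cplxV a : (a^-1)%:C = (a%:C)^-1 :> R[i].
Proof.
have [->|a0] := eqVneq a 0; first by rewrite invr0; apply/esym/invr0.
by apply: ReIm_inj; rewrite !ReImE; field.
Qed.
Lemma conjC_cplx a : Num.conj (a%:C) = a%:C :> R[i].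
Proof. by apply: ReIm_inj; rewrite !ReImE ?oppr0. Qed.
Lemma nsqC x : (complex.Re x ^+ 2 + complex.Im x ^+ 2)%:C = x * Num.conj x.
Proof. by apply: ReIm_inj; rewrite !ReImE; ring. Qed.

Lemma conjCD x y : Num.conj (x + y) = Num.conj x + Num.conj y.
Proof. by apply: ReIm_inj; rewrite !ReImE; ring. Qed.
Lemma conjCM x y : Num.conj (x * y) = Num.conj x * Num.conj y.
Proof. by apply: ReIm_inj; rewrite !ReImE; ring. Qed.

End RealEmbedding.

Notation e0 := (@Ordinal 2 0 erefl).
Notation e1 := (@Ordinal 2 1 erefl).
Notation k0 := (@Ordinal (2 * 2) 0 erefl).
Notation k1 := (@Ordinal (2 * 2) 1 erefl).
Notation k2 := (@Ordinal (2 * 2) 2 erefl).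
Notation k3 := (@Ordinal (2 * 2) 3 erefl).

Lemma ord2_cases (i : 'I_2) : i = e0 \/ i = e1.
Proof. by case: i => [[|[|]] ?]; [left | right | ]; try apply: val_inj. Qed.

Lemma ord4_cases (k : 'I_(2 * 2)) : [\/ k = k0, k = k1, k = k2 | k = k3].
Proof.
case: k => [[|[|[|[|]]]] ?];
  [apply: Or41 | apply: Or42 | apply: Or43 | apply: Or44 | by []]; exact: val_inj.
Qed.

Section OrdinalSums.
Variable V : nmodType.

Lemma sum_ord2 (F : 'I_2 -> V) : \sum_(i < 2) F i = F e0 + F e1.
Proof. by rewrite !big_ord_recr big_ord0 /= add0r; congr (F _ + F _); apply: val_inj. Qed.

Lemma sum_ord3 (F : 'I_3 -> V) : \sum_(i < 3) F i = F 0 + F 1 + F 2%:R.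
Proof.
by rewrite !big_ord_recr big_ord0 /= add0r; congr (F _ + F _ + F _); apply: val_inj.
Qed.

Lemma sum_ord4 (F : 'I_(2 * 2) -> V) :
  \sum_(k < 2 * 2) F k = F k0 + F k1 + F k2 + F k3.
Proof.
by rewrite !big_ord_recr big_ord0 /= add0r; congr (F _ + F _ + F _ + F _); apply: val_inj.
Qed.

End OrdinalSums.

Lemma pidxE (i j : 'I_2) : pidx i j = (i * 2 + j)%N :> nat.
Proof.
have enum2 : enum 'I_2 = [:: ord0; lift ord0 ord0] by rewrite !enum_ordSl enum_ord0.
have enum22 : enum {: 'I_2 * 'I_2} = [seq (i1, i2) | i1 <- enum 'I_2, i2 <- enum 'I_2].
  by rewrite enumT unlock.
rewrite /pidx /mxvec_index /= /enum_rank enum_rank_in.unlock val_insubd enum22 enum2.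
case: i => [[|[|]] ?] //; case: j => [[|[|]] ?] //=.
all: by rewrite card_prod !card_ord.
Qed.

Lemma pidx00 : pidx e0 e0 = k0. Proof. exact/val_inj/pidxE. Qed.
Lemma pidx01 : pidx e0 e1 = k1. Proof. exact/val_inj/pidxE. Qed.
Lemma pidx10 : pidx e1 e0 = k2. Proof. exact/val_inj/pidxE. Qed.
Lemma pidx11 : pidx e1 e1 = k3. Proof. exact/val_inj/pidxE. Qed.

Section HermitianPsd.
Variables (R : realType) (n : nat).
Local Notation C := R[i].
Local Open Scope complex_scope.
Implicit Types (P : 'M[C]_n) (v : 'cV[C]_n).

Lemma herm_conj P : adjmx P = P -> forall k l, P l k = Num.conj (P k l).
Proof. by move=> hP k l; rewrite -{2}hP !mxE conjCK. Qed.

Lemma herm_Im_diag P : adjmx P = P -> forall k, complex.Im (P k k) = 0.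
Proof.
move=> hP k; have := herm_conj hP k k; move: (P k k) => [a b] /= [] hb.
have : b + b = 0 by rewrite {1}hb addNr.
lra.
Qed.

Lemma quad_formE P v :
  (adjmx v *m P *m v) 0 0 = \sum_j (\sum_i Num.conj (v i 0) * P i j) * v j 0.
Proof.
rewrite !mxE; apply: eq_bigr => j _; rewrite !mxE; congr (_ * _).
by apply: eq_bigr => i _; rewrite !mxE.
Qed.

Lemma psd_Re_ge0 P v : psd P -> 0 <= complex.Re ((adjmx v *m P *m v) 0 0).
Proof. by move=> /(_ v); rewrite lecE => /andP[]. Qed.

Section TwoSupported.
Variables (k l : 'I_n) (a b : C).
Hypothesis neq_kl : k != l.

Definition vec2 : 'cV[C]_n := \col_i (if i == k then a else if i == l then b else 0).

Lemma sum_vec2 (F : 'I_n -> C) : (forall j, j != k -> j != l -> F j = 0) ->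
  \sum_j F j = F k + F l.
Proof.
move=> F0; rewrite (bigD1 k) //= (bigD1 l) /=; last by rewrite eq_sym.
by rewrite big1 ?addr0 // => j /andP[jl jk]; apply: F0.
Qed.

Lemma quad_form_vec2 P :
  (adjmx vec2 *m P *m vec2) 0 0 =
  Num.conj a * P k k * a + Num.conj a * P k l * b
  + Num.conj b * P l k * a + Num.conj b * P l l * b.
Proof.
have vec2_out j : j != k -> j != l -> vec2 j 0 = 0.
  by move=> jk jl; rewrite mxE (negbTE jk) (negbTE jl).
rewrite quad_formE sum_vec2 => [|j jk jl]; last by rewrite vec2_out ?mulr0.
rewrite !(@sum_vec2 (fun i => Num.conj (vec2 i 0) * P i _)) => [|j jk jl|j jk jl];
  try by rewrite vec2_out // rmorph0 mul0r.
have neq_lk : l != k by rewrite eq_sym.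
by rewrite !mxE !eqxx (negbTE neq_lk); ring.
Qed.

End TwoSupported.

Lemma psd_offdiag_sqr_le P k l : k != l -> psd P -> adjmx P = P ->
  complex.Re (P k l) ^+ 2 + complex.Im (P k l) ^+ 2
  <= complex.Re (P k k) * complex.Re (P l l).
Proof.
move=> kl hP hH.
(* The test vectors give [u, w >= 0], [u (u w - N) >= 0] and
   [u (w + 1)^2 >= (w + 2) N]; the last one settles the case [u = 0]. *)
have quad a b := psd_Re_ge0 (vec2 k l a b) hP.
move: (quad 1 0) (quad 0 1) (quad (- P k l) (complex.Re (P k k))%:C)
  (quad (complex.Re (P l l) + 1)%:C (- Num.conj (P k l))).
rewrite !quad_form_vec2 // (herm_conj hH k l) !ReImE !herm_Im_diag //.
set u := complex.Re (P k k); set w := complex.Re (P l l).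
set N := _ ^+ 2 + _ ^+ 2.
move=> hu hw huN hw1.
have u0 : 0 <= u by move: hu; congr (_ <= _); ring.
have w0 : 0 <= w by move: hw; congr (_ <= _); ring.
have {}huN : 0 <= u * (u * w - N) by move: huN; congr (_ <= _); rewrite /N; ring.
have {}hw1 : 0 <= u * (w + 1) ^+ 2 - (w + 2) * N.
  by move: hw1; congr (_ <= _); rewrite /N; ring.
have N0 : 0 <= N by rewrite /N; nra.
have [u_gt0 | u_le0] := ltP 0 u; first by rewrite -subr_ge0 -(pmulr_rge0 _ u_gt0).
have -> : u = 0 by apply/eqP; rewrite eq_le u_le0 u0.
by move: hw1; rewrite /u; nra.
Qed.

End HermitianPsd.

Section Bloch.
Variables (R : realType) (r : 'rV[R]_3).
Local Open Scope complex_scope.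

Lemma bloch00 : bloch r e0 e0 = ((1 + r 0 2%:R) / 2)%:C.
Proof. by apply: ReIm_inj; rewrite !mxE /=; field. Qed.
Lemma bloch01 : bloch r e0 e1 = (r 0 0 / 2) +i* (- r 0 1 / 2).
Proof. by apply: ReIm_inj; rewrite !mxE /=; field. Qed.
Lemma bloch10 : bloch r e1 e0 = (r 0 0 / 2) +i* (r 0 1 / 2).
Proof. by apply: ReIm_inj; rewrite !mxE /=; field. Qed.
Lemma bloch11 : bloch r e1 e1 = ((1 - r 0 2%:R) / 2)%:C.
Proof. by apply: ReIm_inj; rewrite !mxE /=; field. Qed.

Lemma row3_normsqE : (r *m r^T) 0 0 = r 0 0 ^+ 2 + r 0 1 ^+ 2 + r 0 2%:R ^+ 2.
Proof. by rewrite !mxE sum_ord3 !mxE !expr2. Qed.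

End Bloch.

Section PartialTraces.
Variable R : realType.
Implicit Type P : 'M[R[i]]_(2 * 2).
Local Open Scope complex_scope.

Lemma ptr_HstarE P :
  [/\ ptr_Hstar P e0 e0 = P k0 k0 + P k1 k1, ptr_Hstar P e0 e1 = P k0 k2 + P k1 k3,
      ptr_Hstar P e1 e0 = P k2 k0 + P k3 k1 & ptr_Hstar P e1 e1 = P k2 k2 + P k3 k3].
Proof. by rewrite !mxE !sum_ord2 !(pidx00, pidx01, pidx10, pidx11). Qed.

Lemma ptr_HE P :
  [/\ ptr_H P e0 e0 = P k0 k0 + P k2 k2, ptr_H P e0 e1 = P k0 k1 + P k2 k3,
      ptr_H P e1 e0 = P k1 k0 + P k3 k2 & ptr_H P e1 e1 = P k1 k1 + P k3 k3].
Proof. by rewrite !mxE !sum_ord2 !(pidx00, pidx01, pidx10, pidx11). Qed.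

Lemma tr_cost_z P p : \tr (P *m cost_z p) = (powR 2 p)%:C * (P k1 k1 + P k2 k2).
Proof. by rewrite /mxtrace sum_ord4 !mxE !sum_ord4 !mxE /= !mulr0 !add0r !addr0; ring. Qed.

Lemma dz_formulaE (p m : R) : dz_formula p m = powR 2 p * ((1 - Num.sqrt (1 - m)) / 2).
Proof.
rewrite /dz_formula powRB; last by apply/implyP; rewrite pnatr_eq0.
by rewrite powRr1 ?ler0n //; ring.
Qed.

End PartialTraces.

Section LowerBound.
Variable R : realType.

Lemma normsq_add_le (x1 y1 x2 y2 c : R) :
  x1 ^+ 2 + y1 ^+ 2 <= c -> x2 ^+ 2 + y2 ^+ 2 <= c ->
  (x1 + x2) ^+ 2 + (y1 + y2) ^+ 2 <= 4 * c.
Proof. by move=> h1 h2; have := sqr_ge0 (x1 - x2); have := sqr_ge0 (y1 - y2); nra. Qed.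

Lemma one_sub_sqrt_le (m t : R) :
  m <= 16 * t * (1 / 2 - t) -> 1 - Num.sqrt (1 - m) <= 4 * t.
Proof.
move=> hm; have sqr_le : (1 - 4 * t) ^+ 2 <= 1 - m by nra.
rewrite lerBlDr -lerBlDl.
apply: le_trans (ler_norm _) _.
by rewrite -sqrtr_sqr ler_sqrt // (le_trans (sqr_ge0 _) sqr_le).
Qed.

End LowerBound.

Section EquatorialCouplings.
Variables (R : realType) (r1 r2 : 'rV[R]_3) (P : 'M[R[i]]_(2 * 2)).
Hypotheses (r1_eq : r1 0 2%:R = 0) (r2_eq : r2 0 2%:R = 0).
Hypothesis coupP : coupling (bloch r1) (bloch r2) P.
Local Open Scope complex_scope.
Local Notation d k := (complex.Re (P k k)).

Lemma coupling_diag : [/\ d k2 = d k1, d k3 = d k0 & d k0 + d k1 = 1 / 2].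
Proof.
case: coupP => _ [hB hA].
have [B00 _ _ B11] := ptr_HstarE P; have [A00 _ _ A11] := ptr_HE P.
rewrite hB bloch00 bloch11 r2_eq in B00 B11.
rewrite hA ![(bloch r1)^T _ _]mxE bloch00 bloch11 r1_eq in A00 A11.
move: (congr1 (@complex.Re R) B00) (congr1 (@complex.Re R) B11)
  (congr1 (@complex.Re R) A00) (congr1 (@complex.Re R) A11).
rewrite !ReImE => b00 b11 a00 a11; split; lra.
Qed.

Lemma coupling_normsq_le :
  (r1 *m r1^T) 0 0 <= 16 * d k0 * d k1 /\ (r2 *m r2^T) 0 0 <= 16 * d k0 * d k1.
Proof.
case: coupP => [[hH [hpsd _]] [hB hA]].
have [d22 d33 _] := coupling_diag.
have cs k l (kl : k != l) := psd_offdiag_sqr_le kl hpsd hH.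
have [_ B01 _ _] := ptr_HstarE P; have [_ A01 _ _] := ptr_HE P.
rewrite hB bloch01 in B01; rewrite hA [(bloch r1)^T _ _]mxE bloch10 in A01.
move: (congr1 (@complex.Re R) B01) (congr1 (@complex.Im R) B01)
  (congr1 (@complex.Re R) A01) (congr1 (@complex.Im R) A01).
rewrite !ReImE !row3_normsqE r1_eq r2_eq !expr0n /= !addr0 => xB yB xA yA.
have cs01 := cs k0 k1 isT; have cs23 := cs k2 k3 isT.
have cs02 := cs k0 k2 isT; have cs13 := cs k1 k3 isT.
rewrite d22 d33 [d k1 * _]mulrC in cs23 cs02 cs13.
have := normsq_add_le cs01 cs23; have := normsq_add_le cs02 cs13.
rewrite -xA -yA -xB -yB; split; nra.
Qed.

Lemma coupling_cost_ge (p : R) :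
  (dz_formula p (Num.max ((r1 *m r1^T) 0 0) ((r2 *m r2^T) 0 0)))%:C
  <= \tr (P *m cost_z p).
Proof.
have [hH _] := coupP.1.
have [d22 _ d0_d1] := coupling_diag; have [n1 n2] := coupling_normsq_le.
rewrite tr_cost_z dz_formulaE lecE !ReImE !herm_Im_diag // d22.
rewrite !(mul0r, mulr0, addr0, subr0) eqxx ler_pM2l ?powR_gt0 //.
suff : 1 - Num.sqrt (1 - Num.max ((r1 *m r1^T) 0 0) ((r2 *m r2^T) 0 0)) <= 4 * d k1.
  by lra.
apply: one_sub_sqrt_le; rewrite ge_max.
by apply/andP; split; nra.
Qed.

End EquatorialCouplings.

Section OptimalCoupling.
Variables (R : realType) (w1 w2 : R[i]) (s t : R).
Local Notation C := R[i].
Local Open Scope complex_scope.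

(* [w1] and [w2] are half the off-diagonal entries of the two marginals.  The
   corner entries are those of the rank-one part in [opt_coupling_quad_sos];
   under the hypotheses of [opt_coupling_psd], [t = 0] forces [w1 = w2 = 0], so
   the junk value [x / 0 = 0] there is harmless. *)
Definition opt_coupling : 'M[C]_(2 * 2) :=
  \matrix_(k, l)
    match nat_of_ord k, nat_of_ord l with
    | 0, 0 | 3, 3 => s%:C
    | 1, 1 | 2, 2 => t%:C
    | 0, 1 | 2, 3 => w1
    | 1, 0 | 3, 2 => Num.conj w1
    | 0, 2 | 1, 3 => w2
    | 2, 0 | 3, 1 => Num.conj w2
    | 0, 3 => (t^-1)%:C * (w1 * w2)
    | 3, 0 => (t^-1)%:C * (Num.conj w1 * Num.conj w2)
    | 1, 2 => (s^-1)%:C * (Num.conj w1 * w2)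
    | 2, 1 => (s^-1)%:C * (w1 * Num.conj w2)
    | _, _ => 0
    end.

Local Notation P := opt_coupling.

Lemma opt_coupling_herm : adjmx P = P.
Proof.
apply/matrixP => k l; rewrite !mxE.
by case: (ord4_cases k) => ->; case: (ord4_cases l) => -> /=;
  apply: ReIm_inj; rewrite !ReImE; ring.
Qed.

Local Notation nsq w := (complex.Re w ^+ 2 + complex.Im w ^+ 2).

(* When [|w1|^2 = s t], [opt_coupling] is [x x^* / s] with
   [x^* = (s, w1, w2, w1 w2 / t)], plus [1 - |w2|^2 / (s t)] times the psd block
   [[t, w1], [w1^*, s]] on the indices 2, 3. *)
Lemma opt_coupling_quad_sos (v : 'cV[C]_(2 * 2)) :
  s != 0 -> t != 0 -> nsq w1 = s * t ->
  let X := s%:C * v k0 0 + w1 * v k1 0 + w2 * v k2 0 + (t^-1)%:C * (w1 * w2) * v k3 0 in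
  let Y := s%:C * v k3 0 + Num.conj w1 * v k2 0 in
  s%:C * (adjmx v *m P *m v) 0 0
  = X * Num.conj X + (1 - nsq w2 / (s * t))%:C * (Y * Num.conj Y).
Proof.
move=> s0 t0 sat X Y; rewrite quad_formE !sum_ord4 !mxE /= {}/X {}/Y.
have cE : (1 - nsq w2 / (s * t))%:C = 1 - w2 * Num.conj w2 / (s%:C * t%:C).
  by apply: ReIm_inj; rewrite !ReImE; field; rewrite s0 t0.
rewrite cE !(conjCD, conjCM, conjCK, conjC_cplx) (cplxV s) (cplxV t).
have Tn0 : t%:C != 0 :> C by rewrite eq_complex /= eqxx andbT.
have w1J_neq0 : w1 * Num.conj w1 != 0.
  by rewrite -nsqC sat eq_complex /= eqxx andbT mulf_neq0.
have w1_neq0 : w1 != 0 by move: w1J_neq0; rewrite mulf_eq0 negb_or => /andP[].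
have -> : s%:C = w1 * Num.conj w1 / t%:C by rewrite -nsqC sat cplxM mulfK.
by field; rewrite !fmorph_eq0 t0 w1_neq0.
Qed.

End OptimalCoupling.

Section OptimalCouplingPsd.
Variables (R : realType) (s t : R).
Local Notation C := R[i].
Local Notation nsq w := (complex.Re w ^+ 2 + complex.Im w ^+ 2).
Local Open Scope complex_scope.

Definition swap_mid (v : 'cV[C]_(2 * 2)) : 'cV[C]_(2 * 2) :=
  \col_k v (tperm k1 k2 k) 0.

Lemma opt_coupling_quad_swap w1 w2 v :
  (adjmx v *m opt_coupling w1 w2 s t *m v) 0 0
  = (adjmx (swap_mid v) *m opt_coupling w2 w1 s t *m swap_mid v) 0 0.
Proof.
rewrite !quad_formE !sum_ord4 !mxE /= tpermL tpermR !tpermD //; ring.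
Qed.

Lemma opt_coupling_psd w1 w2 : 0 < s -> 0 <= t ->
  nsq w1 <= s * t -> nsq w2 <= s * t -> nsq w1 = s * t \/ nsq w2 = s * t ->
  psd (opt_coupling w1 w2 s t).
Proof.
move=> s_gt0 t_ge0 le1 le2 sat.
suff sat_psd u1 u2 : nsq u1 = s * t -> nsq u2 <= s * t -> psd (opt_coupling u1 u2 s t).
  case: sat => [sat1 | sat2]; first exact: sat_psd.
  by move=> v; rewrite opt_coupling_quad_swap; apply: sat_psd.
move=> sat1 le_u2 v.
have s_neq0 : s != 0 by rewrite gt_eqF.
have [t0 | t_neq0] := eqVneq t 0; last first.
  have st_gt0 : 0 < s * t by rewrite mulr_gt0 // lt_neqAle eq_sym t_neq0.
  rewrite -(@pmulr_rge0 _ s%:C) ?ltcR // opt_coupling_quad_sos //.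
  rewrite addr_ge0 ?mul_conjC_ge0 // mulr_ge0 ?mul_conjC_ge0 // ler0c subr_ge0.
  by rewrite ler_pdivrMr // mul1r.
have u0 (u : C) : nsq u <= 0 -> u = 0.
  by move=> nu; apply: ReIm_inj => /=; nra.
rewrite t0 mulr0 in sat1 le_u2.
rewrite (u0 u1) ?sat1 // (u0 u2) // quad_formE !sum_ord4 !mxE /= t0.
rewrite (_ : 0%:C = 0) // conjC0 !mul0r !mulr0 !addr0 !add0r.
rewrite (_ : _ + _ = s%:C * (v k0 0 * Num.conj (v k0 0) + v k3 0 * Num.conj (v k3 0)));
  last by ring.
by rewrite mulr_ge0 ?addr_ge0 ?mul_conjC_ge0 // ler0c ltW.
Qed.

End OptimalCouplingPsd.

Section UpperBound.
Variables (R : realType) (r1 r2 : 'rV[R]_3).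
Hypotheses (r1_eq : r1 0 2%:R = 0) (r2_eq : r2 0 2%:R = 0).
Local Open Scope complex_scope.

Lemma equatorial_coupling_attains (p : R) :
  (r1 *m r1^T) 0 0 <= 1 -> (r2 *m r2^T) 0 0 <= 1 ->
  exists P, coupling (bloch r1) (bloch r2) P /\
    \tr (P *m cost_z p)
    = (dz_formula p (Num.max ((r1 *m r1^T) 0 0) ((r2 *m r2^T) 0 0)))%:C.
Proof.
rewrite dz_formulaE !row3_normsqE r1_eq r2_eq !expr0n /= !addr0 => n1_le n2_le.
set m := Num.max _ _.
have m_ge1 : r1 0 0 ^+ 2 + r1 0 1 ^+ 2 <= m by rewrite le_max lexx.
have m_ge2 : r2 0 0 ^+ 2 + r2 0 1 ^+ 2 <= m by rewrite le_max lexx orbT.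
have m_sat : m = r1 0 0 ^+ 2 + r1 0 1 ^+ 2 \/ m = r2 0 0 ^+ 2 + r2 0 1 ^+ 2.
  by rewrite /m; case: lerP; [right | left].
have q_sq : Num.sqrt (1 - m) ^+ 2 = 1 - m.
  by rewrite sqr_sqrtr // subr_ge0 ge_max n1_le n2_le.
have q_ge0 := sqrtr_ge0 (1 - m).
set q := Num.sqrt (1 - m) in q_sq q_ge0 *; clearbody q.
pose s : R := (1 + q) / 4; pose t : R := (1 - q) / 4.
have m_q : m = 1 - q ^+ 2 by rewrite q_sq; ring.
have st : s * t = m / 16 by rewrite /s /t m_q; field.
pose w1 := (r1 0 0 / 4) +i* (r1 0 1 / 4); pose w2 := (r2 0 0 / 4) +i* (- r2 0 1 / 4).
have [B00 B01 B10 B11] := ptr_HstarE (opt_coupling w1 w2 s t).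
have [A00 A01 A10 A11] := ptr_HE (opt_coupling w1 w2 s t).
exists (opt_coupling w1 w2 s t); split; last first.
  by rewrite tr_cost_z !mxE /=; apply: ReIm_inj; rewrite !ReImE /t; field.
split; [split; [exact: opt_coupling_herm | split] | split].
- have q_le1 : q <= 1 by nra.
  apply: opt_coupling_psd; [by rewrite /s; lra | by rewrite /t; lra | | | ].
  1-3: rewrite st /=.
  1,2: nra.
  by case: m_sat => ->; [left | right]; field.
- by rewrite /mxtrace sum_ord4 !mxE /=; apply: ReIm_inj; rewrite !ReImE /s /t; field.
- apply/matrixP => i j; case: (ord2_cases i) => ->; case: (ord2_cases j) => ->;
  rewrite ?(B00, B01, B10, B11) ?(bloch00, bloch01, bloch10, bloch11) ?r2_eq !mxE /=;
  by apply: ReIm_inj; rewrite !ReImE /s /t; field.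
- apply/matrixP => i j; case: (ord2_cases i) => ->; case: (ord2_cases j) => ->;
  rewrite ?(A00, A01, A10, A11) [(bloch r1)^T _ _]mxE
    ?(bloch00, bloch01, bloch10, bloch11) ?r1_eq !mxE /=;
  by apply: ReIm_inj; rewrite !ReImE /s /t; field.
Qed.

End UpperBound.

Lemma Dzp_pow_equatorial (R : realType) (r1 r2 : 'rV[R]_3) (p : R) :
  (r1 *m r1^T) 0 0 <= 1 -> (r2 *m r2^T) 0 0 <= 1 ->
  r1 0 2%:R = 0 -> r2 0 2%:R = 0 ->
  is_Dzp_pow p (bloch r1) (bloch r2)
    (dz_formula p (Num.max ((r1 *m r1^T) 0 0) ((r2 *m r2^T) 0 0))).
Proof.
move=> n1_le n2_le r1_eq r2_eq; split; first exact: equatorial_coupling_attains.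
by move=> P coupP; apply: coupling_cost_ge.
Qed.

Theorem theorem3p6 (R : realType) (r1 r2 : 'rV[R]_3) :
  (r1 *m r1^T) 0 0 <= 1 -> (r2 *m r2^T) 0 0 <= 1 ->
  r1 0 2%:R = 0 -> r2 0 2%:R = 0 ->
  forall p : R, 1 <= p ->
    let n1 := (r1 *m r1^T) 0 0 in
    let n2 := (r2 *m r2^T) 0 0 in
    is_Dzp_pow p (bloch r1) (bloch r2) (dz_formula p (Num.max n1 n2)) /\
    (n2 <= n1 ->
       is_Dzp_pow p (bloch r1) (bloch r2) (dz_formula p n1) /\
       is_Dzp_pow p (bloch r2) (bloch r1) (dz_formula p n1) /\
       is_Dzp_pow p (bloch r1) (bloch r1) (dz_formula p n1)).
Proof.
move=> n1_le n2_le r1_eq r2_eq p _ n1 n2.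
split=> [|n21]; first exact: Dzp_pow_equatorial.
split; first by rewrite -(max_idPl n21); exact: Dzp_pow_equatorial.
split; first by rewrite -(max_idPr n21); exact: Dzp_pow_equatorial.
by rewrite -(maxxx n1); exact: Dzp_pow_equatorial.
Qed.
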